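(* For integers $n\ge 1$ and $k\ge 1$, let $a_{n,k}$ be the number of permutations $\pi=\pi_1\cdots\pi_n\in\mathcal{S}_n$ such that (i) there is no $i$ with $\pi_i\pi_{i+1}\pi_{i+2}$ order isomorphic to $231$, (ii) there is no $i$ with $\pi_i\pi_{i+1}\pi_{i+2}$ order isomorphic to $132$, and (iii) there is no $i$ with $\pi_{i+k}=\pi_i+1$ (i.e. $\pi$ avoids the place-difference-value pattern $(12,(\mathbb{P},\{k\},\mathbb{P}),\{(1,2,\{1\})\},(\mathbb{P},\mathbb{P}))$). Then $$a_{n,k}=\begin{cases}F(n) & \text{if } k=1,\\ 2^{n-1} & \text{if } k\ge 2 \text{ and } n\le k,\\ 3\cdot 2^{n-3} & \text{if } k\ge 2\text{ and } n\ge k+1,\end{cases}$$ where $F(n)$ is the $n$-th Fibonacci number, $F(1)=F(2)=1$, $F(n)=F(n-1)+F(n-2)$.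
   Context: $\mathcal{S}_n$ is the set of permutations of $\{1,\dots,n\}$ written as words; $\mathbb{P}$ is the set of positive integers. Conditions (i) and (ii) say $\pi$ avoids the consecutive (generalized) patterns $231$ and $132$. *)

From mathcomp Require Import all_boot all_fingroup.
Set Implicit Arguments. Unset Strict Implicit. Unset Printing Implicit Defensive.

Fixpoint fib (n : nat) : nat :=
  match n with
  | 0 => 0
  | 1 => 1
  | (m.+1 as p).+1 => fib p + fib m
  end.

(* The word pi_1 ... pi_n of s : 'S_n, read 0-indexed: word s i = pi_{i+1},
   with values in {1,...,n} (s j is in 'I_n, shifted by one). *)
Definition word (n : nat) (s : 'S_n) (i : nat) : nat :=
  nth 0 [seq (s j : nat).+1 | j <- enum 'I_n] i.

Definition occ231 (n : nat) (s : 'S_n) (i : nat) : bool :=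
  (i + 2 < n) && (word s (i + 2) < word s i) && (word s i < word s (i + 1)).

Definition occ132 (n : nat) (s : 'S_n) (i : nat) : bool :=
  (i + 2 < n) && (word s i < word s (i + 2)) && (word s (i + 2) < word s (i + 1)).

Definition occPDV (k n : nat) (s : 'S_n) (i : nat) : bool :=
  (i + k < n) && (word s (i + k) == (word s i).+1).

Definition good (k n : nat) (s : 'S_n) : bool :=
  [forall i : 'I_n, ~~ occ231 s i && ~~ occ132 s i && ~~ occPDV k s i].

(* A consecutive 231 or 132 is exactly a peak, so conditions (i) and (ii) say that the
   word is peak-free.  The maximum of a peak-free permutation sits at one of its ends,
   hence the peak-free arrangements of 1..m+1 are those built from [1] by putting each
   next value at the front or at the back: the 2^m V-shaped words [vwords m].
   Putting the new maximum N at the front never creates pi_(i+k) = pi_i + 1, as N + 1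
   does not occur; putting it at the back creates one exactly when N - 1 stands k
   places before it.  Counting separately the good words that stay good when the next
   maximum is appended at the back ([ext_count]) gives the recursion
     f(m+1) = f(m) + e(m),    e(m+1) = [k <> m+2] f(m) + [k <> 1] e(m),
   which is Fibonacci for k = 1 and solves to powers of two otherwise. *)

From mathcomp Require Import all_boot all_fingroup zify.
Set Implicit Arguments. Unset Strict Implicit. Unset Printing Implicit Defensive.

Definition peak (l : seq nat) i :=
  [&& i.+2 < size l, nth 0 l i < nth 0 l i.+1 & nth 0 l i.+2 < nth 0 l i.+1].

Definition peakfree l := all (fun i => ~~ peak l i) (iota 0 (size l)).

Definition pdv_at k (l : seq nat) i :=
  (i + k < size l) && (nth 0 l (i + k) == (nth 0 l i).+1).

Definition pdvfree k l := all (fun i => ~~ pdv_at k l i) (iota 0 (size l)).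

Lemma peakfreeP l : reflect (forall i, ~~ peak l i) (peakfree l).
Proof.
apply: (iffP allP) => [H i|H i _]; last exact: H.
case: (ltnP i (size l)) => [lt_il | le_li]; first by apply: H; rewrite mem_iota.
by apply/negP => /and3P[]; lia.
Qed.

Lemma pdvfreeP k l : reflect (forall i, ~~ pdv_at k l i) (pdvfree k l).
Proof.
apply: (iffP allP) => [H i|H i _]; last exact: H.
case: (ltnP i (size l)) => [lt_il | le_li]; first by apply: H; rewrite mem_iota.
by apply/negP => /andP[]; lia.
Qed.

Lemma peakfree_cons N (q : seq nat) :
  {in q, forall y, y <= N} -> peakfree (N :: q) = peakfree q.
Proof.
move=> le_qN; apply/peakfreeP/peakfreeP => H i; first exact: (H i.+1).
case: i => [|i]; last exact: (H i).
case: q le_qN {H} => [|a q] // le_qN; have := le_qN a (mem_head a q).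
by rewrite /peak /= => le_aN; apply/negP => /and3P[_]; rewrite ltnNge le_aN.
Qed.

Lemma peak_rcons N p i : i.+2 < size p -> peak (rcons p N) i = peak p i.
Proof.
move=> hi; have h1 : i.+1 < size p := ltnW hi; have h0 : i < size p := ltnW h1.
by rewrite /peak size_rcons !nth_rcons hi h1 h0 ltnS (ltnW hi).
Qed.

Lemma peakfree_rcons N (p : seq nat) :
  {in p, forall y, y <= N} -> peakfree (rcons p N) = peakfree p.
Proof.
move=> le_pN; apply/peakfreeP/peakfreeP => H i.
  case: (ltnP i.+2 (size p)) => hi; first by rewrite -(peak_rcons N hi).
  by apply/negP => /and3P[]; lia.
case: (ltngtP i.+2 (size p)) => hi; first by rewrite peak_rcons.
  by apply/negP => /and3P[]; rewrite size_rcons; lia.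
rewrite /peak size_rcons !nth_rcons -hi !ltnS leqnn ltnn eqxx leqnSn /=.
have := le_pN _ (mem_nth 0 (_ : i.+1 < size p)); rewrite -hi => /(_ (ltnSn _)) le_N.
by rewrite [N < _]ltnNge le_N andbF.
Qed.

Lemma pdvfree_cons k N q : 0 < k ->
  pdvfree k (N :: q) = ~~ ((k <= size q) && (nth 0 q k.-1 == N.+1)) && pdvfree k q.
Proof.
case: k => // k _; apply/pdvfreeP/andP => [H|[h0 /pdvfreeP H] [|i]].
- split; first exact: (H 0).
  by apply/pdvfreeP => i; have := H i.+1; rewrite /pdv_at /= addSn.
- exact: h0.
- by have := H i; rewrite /pdv_at /= addSn.
Qed.

Lemma pdvfree_rcons k N p : 0 < k ->
  pdvfree k (rcons p N) =
    pdvfree k p && ~~ ((k <= size p) && (N == (nth 0 p (size p - k)).+1)).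
Proof.
move=> k0; apply/pdvfreeP/andP => [H|[/pdvfreeP H hlast] i].
  split.
    apply/pdvfreeP => i; apply: contra (H i) => /andP[hi].
    have hi' : i < size p by lia.
    by rewrite /pdv_at size_rcons !nth_rcons hi hi' ltnS (ltnW hi).
  apply: contra (H (size p - k)) => /andP[hk /eqP ->].
  rewrite /pdv_at size_rcons !nth_rcons subnK // ltnn eqxx ltnSn.
  by rewrite ifT //; lia.
rewrite /pdv_at size_rcons !nth_rcons.
case: (ltngtP (i + k) (size p)) => hi.
- have hi' : i < size p by lia.
  by have := H i; rewrite /pdv_at hi hi' ltnS (ltnW hi).
- by apply/negP => /andP[]; lia.
have -> : i = size p - k by lia.
have -> : size p - k < size p by lia.
have hk : k <= size p by lia.
by move: hlast; rewrite hk subnK // ltnSn.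
Qed.

Lemma peakfree_max_end (l : seq nat) (M : nat) : uniq l -> peakfree l -> M \in l ->
  {in l, forall y, y <= M} -> exists q : seq nat, l = M :: q \/ l = rcons q M.
Proof.
move=> ul /peakfreeP nopeak Ml leM.
have [j lt_jl nth_j] : exists2 j, j < size l & nth 0 l j = M.
  by exists (index M l); [rewrite index_mem | rewrite nth_index].
have lt_M i : i < size l -> i != j -> nth 0 l i < M.
  move=> lt_il ne_ij; rewrite ltn_neqAle leM ?mem_nth // andbT -nth_j.
  by rewrite nth_uniq.
case: (posnP j) => [j0 | j_gt0].
  case: l {ul nopeak Ml leM lt_M} lt_jl nth_j => // x q _.
  by rewrite j0 => <-; exists q; left.
case: (ltnP j.+1 (size l)) => [lt_j1l | le_lj1].
  have := nopeak j.-1; rewrite /peak prednK // lt_j1l nth_j !lt_M //; lia.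
case/lastP: l {ul nopeak Ml leM lt_M j_gt0} lt_jl nth_j le_lj1 => [|q x] //.
rewrite size_rcons nth_rcons => lt_jq1 + le_qj.
have -> : j = size q by lia.
by rewrite ltnn eqxx => ->; exists q; right.
Qed.

Lemma iotaS_rcons n : iota 1 n.+1 = rcons (iota 1 n) n.+1.
Proof. by rewrite -cats1 -(iotaD 1 n 1) addn1. Qed.

Lemma perm_cons_iota n q : perm_eq (n.+1 :: q) (iota 1 n.+1) = perm_eq q (iota 1 n).
Proof. by rewrite iotaS_rcons perm_sym perm_rcons perm_cons perm_sym. Qed.

Lemma perm_rcons_iota n q : perm_eq (rcons q n.+1) (iota 1 n.+1) = perm_eq q (iota 1 n).
Proof. by rewrite perm_rcons perm_cons_iota. Qed.

Lemma perm_iota_bound n (l : seq nat) (y : nat) :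
  perm_eq l (iota 1 n) -> y \in l -> 0 < y <= n.
Proof. by move=> pl; rewrite (perm_mem pl) mem_iota; lia. Qed.

Fixpoint vwords m : seq (seq nat) :=
  if m is m'.+1 then [seq m.+1 :: l | l <- vwords m'] ++ [seq rcons l m.+1 | l <- vwords m']
  else [:: [:: 1]].

Lemma mem_vwords m (l : seq nat) :
  (l \in vwords m) = perm_eq l (iota 1 m.+1) && peakfree l.
Proof.
elim: m l => [|m IH] l.
  apply/idP/andP => [|[pl _]]; first by rewrite inE => /eqP ->.
  by rewrite (perm_small_eq _ pl) ?inE.
apply/idP/idP => [|/andP[pl pfl]].
  rewrite [vwords _]/= mem_cat => /orP[] /mapP[q + ->]; rewrite IH => /andP[pq pfq];
    have le_q y : y \in q -> y <= m.+2 by move/(perm_iota_bound pq); lia.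
    by rewrite perm_cons_iota peakfree_cons //; apply/andP.
  by rewrite perm_rcons_iota peakfree_rcons //; apply/andP.
have ul : uniq l by rewrite (perm_uniq pl) iota_uniq.
have le_l y : y \in l -> y <= m.+2 by move/(perm_iota_bound pl)/andP=> [].
have Ml : m.+2 \in l by rewrite (perm_mem pl) mem_iota; lia.
have [q [El | El]] := peakfree_max_end ul pfl Ml le_l; subst l;
  rewrite [vwords _]/= mem_cat; apply/orP; [left | right]; apply/mapP; exists q => //.
- move: pl pfl; rewrite IH perm_cons_iota peakfree_cons; first by move=> *; apply/andP.
  by move=> y yq; apply: le_l; rewrite inE yq orbT.
move: pl pfl; rewrite IH perm_rcons_iota peakfree_rcons; first by move=> *; apply/andP.
by move=> y yq; apply: le_l; rewrite mem_rcons inE yq orbT.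
Qed.

Lemma uniq_vwords m : uniq (vwords m).
Proof.
elim: m => [|m IH] //=.
have cons_inj : injective (cons m.+2) by move=> a b [].
rewrite cat_uniq !map_inj_uniq ?IH //=; last exact: rcons_injl.
rewrite andbT; apply/hasPn => _ /mapP[q + ->].
rewrite mem_vwords => /andP[pq _]; apply/negP => /mapP[r _].
case: q pq => [|x q] pq //= [Ex _].
by have := perm_iota_bound pq (mem_head x q); rewrite Ex ltnn andbF.
Qed.

Lemma size_vword m (l : seq nat) : l \in vwords m -> size l = m.+1.
Proof. by rewrite mem_vwords => /andP[/perm_size -> _]; rewrite size_iota. Qed.

Lemma vword_nth_eqF m (l : seq nat) i N :
  l \in vwords m -> m.+1 < N -> (nth 0 l i == N) = false.
Proof.
rewrite mem_vwords => /andP[pl _] lt_mN; apply/negbTE.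
case: (ltnP i (size l)) => [lt_il | le_li]; last by rewrite nth_default //; lia.
by have : 0 < nth 0 l i <= m.+1 := perm_iota_bound pl (mem_nth 0 lt_il); lia.
Qed.

Lemma vword_rcons_nth m (l : seq nat) i N : l \in vwords m -> m.+1 < N ->
  (nth 0 (rcons l N) i == N) = (i == m.+1).
Proof.
move=> lv lt_mN; rewrite nth_rcons (size_vword lv).
case: (ltngtP i m.+1) => _; [exact: vword_nth_eqF lv _ | | exact: eqxx].
by rewrite eq_sym gtn_eqF //; lia.
Qed.

Lemma count_andl T (b : bool) (a : pred T) s : count (fun x => b && a x) s = b * count a s.
Proof. by case: b; rewrite ?mul1n ?count_pred0 //; apply: eq_count. Qed.

Section PdvCount.
Variable k : nat.
Hypothesis k_gt0 : 0 < k.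

Definition free_count m := count (pdvfree k) (vwords m).
Definition ext_count m := count (fun l => pdvfree k (rcons l m.+2)) (vwords m).

Lemma free_count_S m : free_count m.+1 = free_count m + ext_count m.
Proof.
rewrite /free_count /ext_count [vwords _]/= count_cat !count_map; congr (_ + _).
by apply: eq_in_count => q qv /=; rewrite pdvfree_cons // (vword_nth_eqF _ qv) ?andbF.
Qed.

Lemma ext_count_S m :
  ext_count m.+1 = (k != m.+2) * free_count m + (k != 1) * ext_count m.
Proof.
rewrite /free_count /ext_count [vwords _]/= count_cat !count_map -!count_andl.
congr (_ + _); apply: eq_in_count => q qv /=.
  rewrite pdvfree_cons // pdvfree_rcons // size_rcons (size_vword qv).
  rewrite (vword_rcons_nth _ qv) // [m.+3 == _]eq_sym eqSS (vword_nth_eqF _ qv) //.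
  rewrite andbF andbT; congr (_ && _).
  case: (k =P m.+2) => [-> | ne_k]; first by rewrite leqnn eqxx.
  by apply/negP => /andP[_ /eqP]; lia.
rewrite pdvfree_rcons // size_rcons (size_vword qv) eqSS eq_sym (vword_rcons_nth _ qv) //.
rewrite [RHS]andbC; congr (_ && _).
case: (k =P 1) => [-> | ne_k]; first by rewrite subSS subn0 !eqxx.
by apply/negP => /andP[_ /eqP]; lia.
Qed.

Lemma free_count0 : free_count 0 = 1.
Proof. by rewrite /free_count /= /pdvfree /= /pdv_at /=; case: k k_gt0. Qed.

Lemma ext_count0 : ext_count 0 = (k != 1).
Proof. by rewrite /ext_count /= /pdvfree /= /pdv_at /=; case: k k_gt0 => [|[|j]]. Qed.

End PdvCount.

Lemma free_ext_count_fib m : free_count 1 m = fib m.+1 /\ ext_count 1 m = fib m.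
Proof.
elim: m => [|m [IHf IHe]]; first by rewrite free_count0 ?ext_count0.
rewrite free_count_S ?ext_count_S // IHf IHe mul0n addn0.
by split => //; exact: mul1n.
Qed.

Lemma free_ext_count_pow k m : 1 < k ->
  free_count k m = (if m < k then 2 ^ m else 3 * 2 ^ (m - 2)) /\
  ext_count k m = (if m.+1 < k then 2 ^ m
                   else if m.+1 == k then 2 ^ (m - 1) else 3 * 2 ^ (m - 2)).
Proof.
move=> k_gt1; have k_gt0 : 0 < k by lia.
have k_neq1 : (k != 1) = true by apply/eqP; lia.
elim: m => [|m [IHf IHe]]; first by rewrite free_count0 // ext_count0 // k_gt0 k_gt1 k_neq1.
rewrite free_count_S // ext_count_S // IHf IHe k_neq1 mul1n.
case: (ltngtP m.+2 k) => [lt_m2k | lt_km2 | <-].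
- have -> : m < k by lia.
  by rewrite mul1n expnS; split; lia.
- case: (m.+1 =P k) => [Ek | ne_k].
    case: m Ek {IHf IHe lt_km2} => [|m] Ek; first lia.
    have -> : m.+1 < k by lia.
    by rewrite !subSS !subn0 expnS; split; lia.
  have -> : (m < k) = false by lia.
  case: m lt_km2 ne_k {IHf IHe} => [|[|m]] lt_km2 ne_k; try lia.
  by rewrite !subSS !subn0 expnS; split; lia.
have -> : m < m.+2 by [].
by rewrite mul0n subSS subn0 expnS; split; lia.
Qed.

Definition perm_word n (s : 'S_n) : seq nat := [seq (s j : nat).+1 | j <- enum 'I_n].

Lemma size_perm_word n (s : 'S_n) : size (perm_word s) = n.
Proof. by rewrite size_map size_enum_ord. Qed.

Lemma perm_word_iota n (s : 'S_n) : perm_eq (perm_word s) (iota 1 n).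
Proof.
apply: uniq_perm; last 1 first.
- move=> y; rewrite mem_iota; apply/mapP/idP => [[j _ ->] | /andP[y_gt0]].
    by rewrite add1n !ltnS ltn_ord.
  case: y y_gt0 => // y _; rewrite add1n ltnS => lt_yn.
  by exists ((s^-1)%g (Ordinal lt_yn)); rewrite ?mem_enum // permKV.
- by rewrite map_inj_uniq ?enum_uniq // => i j [/val_inj/perm_inj].
exact: iota_uniq.
Qed.

Lemma perm_word_inj n : injective (@perm_word n).
Proof.
move=> s1 s2 Es; apply/permP => j; apply/val_inj.
have := congr1 (nth 0 ^~ j) Es.
by rewrite /perm_word !(nth_map j) -?enumT ?size_enum_ord // nth_ord_enum => -[E].
Qed.

Lemma perm_word_onto n (l : seq nat) :
  perm_eq l (iota 1 n) -> exists s : 'S_n, perm_word s = l.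
Proof.
move=> pl; have size_l : size l = n by rewrite (perm_size pl) size_iota.
have ul : uniq l by rewrite (perm_uniq pl) iota_uniq.
have bound_l (j : 'I_n) : 0 < nth 0 l j <= n.
  by apply: perm_iota_bound pl _; rewrite mem_nth // size_l.
case: n size_l bound_l {pl} => [|n] size_l bound_l.
  by exists 1%g; rewrite (size0nil size_l); apply/eqP; rewrite -size_eq0 size_perm_word.
pose f (j : 'I_n.+1) : 'I_n.+1 := inord (nth 0 l j).-1.
have val_f j : (f j : nat).+1 = nth 0 l j.
  by rewrite inordK; have := bound_l j; lia.
have f_inj : injective f.
  move=> i j /(congr1 (fun x : 'I_n.+1 => (x : nat).+1)); rewrite !val_f => Eij.
  apply/val_inj/eqP; rewrite -(nth_uniq 0 _ _ ul) ?size_l ?Eij //; exact: ltn_ord.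
exists (perm f_inj); rewrite /perm_word (eq_map (_ : _ =1 nth 0 l \o val)).
  by rewrite map_comp val_enum_ord -size_l; apply: mkseq_nth.
by move=> j; rewrite permE val_f.
Qed.

Lemma occ_peak n (s : 'S_n) i : occ231 s i || occ132 s i = peak (perm_word s) i.
Proof.
rewrite /occ231 /occ132 /peak /word -/(perm_word s) size_perm_word !addn2 addn1.
case: (ltnP i.+2 n) => //= lt_i2n.
have : nth 0 (perm_word s) i != nth 0 (perm_word s) i.+2.
  by rewrite nth_uniq ?size_perm_word ?(perm_uniq (perm_word_iota s)) ?iota_uniq //; lia.
by move=> ne_ac; apply/idP/idP; lia.
Qed.

Lemma good_perm_word k n (s : 'S_n) :
  good k s = peakfree (perm_word s) && pdvfree k (perm_word s).
Proof.
have occPDV_E i : occPDV k s i = pdv_at k (perm_word s) i.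
  by rewrite /occPDV /pdv_at size_perm_word.
apply/forallP/andP => [H | [/allP P /allP Q] i].
  by split; apply/allP => i; rewrite mem_iota size_perm_word => /andP[_ lt_in];
    have := H (Ordinal lt_in); rewrite -negb_or occ_peak occPDV_E => /andP[].
have i_in : val i \in iota 0 (size (perm_word s)) by rewrite mem_iota size_perm_word /=.
by rewrite -negb_or occ_peak occPDV_E P ?Q.
Qed.

Lemma card_good_perm k m : 0 < k -> #|[set s : 'S_m.+1 | good k s]| = free_count k m.
Proof.
move=> k_gt0; rewrite cardE -(size_map (@perm_word _)) /free_count -size_filter.
apply/perm_size/uniq_perm.
- by rewrite map_inj_uniq ?enum_uniq //; exact: perm_word_inj.
- by rewrite filter_uniq ?uniq_vwords.
move=> l; rewrite mem_filter mem_vwords; apply/mapP/idP => [[s] | /and3P[pdv_l pl pf_l]].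
  by rewrite mem_enum inE good_perm_word => /andP[pf pd] ->; rewrite pd perm_word_iota pf.
have [s Es] := perm_word_onto pl; exists s => //.
by rewrite mem_enum inE good_perm_word Es pf_l pdv_l.
Qed.

Unset Implicit Arguments.

Theorem mainTheorem2 (n k : nat) : 1 <= n -> 1 <= k ->
  #|[set s : 'S_n | good k s]| =
    (if k == 1 then fib n
     else if n <= k then 2 ^ (n - 1)
     else 3 * 2 ^ (n - 3)).
Proof.
case: n => [|m] // _ k_gt0; rewrite card_good_perm //.
case: (k =P 1) => [-> | /eqP k_neq1]; first by case: (free_ext_count_fib m).
have k_gt1 : 1 < k by lia.
have [-> _] := free_ext_count_pow m k_gt1.
by rewrite subn1 subSS.
Qed.
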